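(* For any pairwise commuting qubit states $\rho,\sigma,\omega\in\mathcal{S}(\mathbb{C}^2)$, $$d^2_{\mathrm{symm},2}(\rho,\sigma)+d^2_{\mathrm{symm},2}(\sigma,\omega)\ge d^2_{\mathrm{symm},2}(\rho,\omega).$$
   Context: Qubit setting: $\mathcal{H}=\mathbb{C}^2$, $\mathcal{H}^*$ is identified with $\mathbb{C}^2$ via the dual basis, and $A^T$ is the usual matrix transpose; operators on $\mathcal{H}\otimes\mathcal{H}^*$ are $4\times4$ matrices in the basis $e_1\otimes e_1^*,e_1\otimes e_2^*,e_2\otimes e_1^*,e_2\otimes e_2^*$. Pauli matrices: $\sigma_1=\begin{pmatrix}0&1\\1&0\end{pmatrix}$, $\sigma_2=\begin{pmatrix}0&-i\\i&0\end{pmatrix}$, $\sigma_3=\begin{pmatrix}1&0\\0&-1\end{pmatrix}$. The set of couplings of states $\rho,\omega$ is $\mathcal{C}(\rho,\omega)=\{\Pi\in\mathcal{S}(\mathcal{H}\otimes\mathcal{H}^* ):\mathrm{tr}_{\mathcal{H}^*}[\Pi]=\omega,\ \mathrm{tr}_{\mathcal{H}}[\Pi]=\rho^T\}$. $C_{\mathrm{symm},2}=\sum_{k=1}^3(\sigma_k\otimes I^T-I\otimes\sigma_k^T)^2$, which equals the matrix $\begin{pmatrix}4&0&0&-4\\0&8&0&0\\0&0&8&0\\-4&0&0&4\end{pmatrix}$; $D^2_{\mathrm{symm},2}(\rho,\omega)=\min_{\Pi\in\mathcal{C}(\rho,\omega)}\mathrm{tr}[\Pi C_{\mathrm{symm},2}]$,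 and $d_{\mathrm{symm},2}(\rho,\omega)=\big(D^2_{\mathrm{symm},2}(\rho,\omega)-\tfrac12(D^2_{\mathrm{symm},2}(\rho,\rho)+D^2_{\mathrm{symm},2}(\omega,\omega))\big)^{1/2}$. Note the claim is the triangle inequality for the squared quantity $d^2_{\mathrm{symm},2}$. *)

From HB Require Import structures.
From mathcomp Require Import all_boot all_order all_algebra.
From mathcomp Require Import complex mxtens.
From mathcomp Require Import classical_sets reals.
Set Implicit Arguments. Unset Strict Implicit. Unset Printing Implicit Defensive.
Import Order.TTheory GRing.Theory Num.Theory.
Local Open Scope ring_scope.

Section Defs.
Variable R : realType.
Local Notation C := R[i].

Definition adjmx {m n} (A : 'M[C]_(m, n)) : 'M[C]_(n, m) :=
  (map_mx (@conjc R) A)^T.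

(* positive semidefinite: <v, A v> >= 0 for all v (in the order of C,
   i.e. real and nonnegative) *)
Definition psd {n} (A : 'M[C]_n) : Prop :=
  forall v : 'cV[C]_n, 0 <= (adjmx v *m A *m v) ord0 ord0.

Definition state {n} (A : 'M[C]_n) : Prop := psd A /\ \tr A = 1.

Definition pauli1 : 'M[C]_2 := \matrix_(i < 2, j < 2) (if i != j then 1 else 0).
Definition pauli2 : 'M[C]_2 := \matrix_(i < 2, j < 2)
  (if (i == 0) && (j == 1) then - 'i%C else if (i == 1) && (j == 0) then 'i%C else 0).
Definition pauli3 : 'M[C]_2 := \matrix_(i < 2, j < 2)
  (if i == j then (if i == 0 then 1 else -1) else 0).

(* operators on H (x) H^*, basis e_i (x) e_j^* indexed by mxtens_index (i,j) = 2i+j *)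
Definition Csymm2 : 'M[C]_(2 * 2) :=
  \sum_(k <- [:: pauli1; pauli2; pauli3])
     (k *t (1%:M : 'M[C]_2)^T - (1%:M : 'M[C]_2) *t k^T) ^+ 2.

Definition ptr2 (P : 'M[C]_(2 * 2)) : 'M[C]_2 :=
  \matrix_(i < 2, k < 2) \sum_(j < 2) P (mxtens_index (i, j)) (mxtens_index (k, j)).
Definition ptr1 (P : 'M[C]_(2 * 2)) : 'M[C]_2 :=
  \matrix_(j < 2, l < 2) \sum_(i < 2) P (mxtens_index (i, j)) (mxtens_index (i, l)).

Definition coupling (rho omega : 'M[C]_2) (P : 'M[C]_(2 * 2)) : Prop :=
  state P /\ ptr2 P = omega /\ ptr1 P = rho^T.

(* D^2_{symm,2}(rho, omega) = min over couplings of tr[P C]; tr[P C] is real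
   for P psd, we take its real part. The min is attained (compact set), so
   it coincides with the infimum used here. *)
Definition Dsymm2_sq (rho omega : 'M[C]_2) : R :=
  inf [set x : R | exists P, coupling rho omega P /\ x = complex.Re (\tr (P *m Csymm2))]%classic.

Definition dsymm2_sq (rho omega : 'M[C]_2) : R :=
  Dsymm2_sq rho omega - (Dsymm2_sq rho rho + Dsymm2_sq omega omega) / 2.

End Defs.

(* Commuting qubit states are diagonal in a common orthonormal basis, and
   conjugating a coupling by U ⊗ Ū maps the couplings of (ρ, ω) onto those of
   (UρU†, UωU†) without changing its cost, so it suffices to treat
   ρ = diag(p, 1-p) and ω = diag(q, 1-q).  The cost matrix is
   C_symm,2 = 8 - 4|Ω⟩⟨Ω| with Ω = Σ_a e_a ⊗ e_a^*, so a coupling Π costs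
   8 - 4⟨Ω|Π|Ω⟩.  Positivity of Π gives |Π_{00,11}| ≤ √(Π_{00,00} Π_{11,11}),
   and the marginal constraints give Π_{00,00} ≤ min(p, q) and
   Π_{11,11} ≤ min(1-p, 1-q); hence ⟨Ω|Π|Ω⟩ is at most the overlap
   G(p, q) = (√min(p, q) + √min(1-p, 1-q))², which an explicit coupling
   attains.  Thus D² = 8 - 4G, and the triangle inequality for d² becomes
   G(p, s) + G(s, q) ≤ G(p, q) + G(s, s) on [0, 1], which is checked by
   comparing the positions of p, q and s. *)

From HB Require Import structures.
From mathcomp Require Import all_boot all_order all_algebra.
From mathcomp Require Import complex mxtens.
From mathcomp Require Import classical_sets reals.
From mathcomp Require Import spectral ring lra.
Import Order.TTheory GRing.Theory Num.Theory.
Local Open Scope complex_scope.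
Local Open Scope ring_scope.
Set Implicit Arguments. Unset Strict Implicit. Unset Printing Implicit Defensive.

Section Overlap.
Variable R : realType.
Local Notation sqrt := (@Num.sqrt R).

Definition overlap (p q : R) :=
  (sqrt (Num.min p q) + sqrt (Num.min (1 - p) (1 - q))) ^+ 2.

Lemma overlapC p q : overlap p q = overlap q p.
Proof. by rewrite /overlap minC [Num.min (1 - p) _]minC. Qed.

Lemma overlap_le p q : 0 <= p -> q <= 1 -> p <= q ->
  overlap p q = p + (1 - q) + 2 * sqrt p * sqrt (1 - q).
Proof.
move=> p0 q1 pq; rewrite /overlap min_l // min_r; last by lra.
by rewrite sqrrD !sqr_sqrtr; [ring | lra | lra].
Qed.

Lemma overlap_submod p q s : 0 <= p <= 1 -> 0 <= q <= 1 -> 0 <= s <= 1 ->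
  overlap p s + overlap s q <= overlap p q + overlap s s.
Proof.
wlog pq : p q / p <= q.
  move=> le_pq hp hq hs; have [/le_pq|/ltW qp] := lerP p q; first exact.
  rewrite addrC (overlapC s q) (overlapC p s) (overlapC p q).
  exact: le_pq.
move=> /andP[p0 p1] /andP[q0 q1] /andP[s0 s1].
have sp0 := sqrtr_ge0 p; have sq0 := sqrtr_ge0 q; have ss0 := sqrtr_ge0 s.
have sp1 := sqrtr_ge0 (1 - p); have sq1 := sqrtr_ge0 (1 - q).
have ss1 := sqrtr_ge0 (1 - s).
rewrite (overlap_le p0 q1 pq) (overlap_le s0 s1 (lexx s)).
have [sp|ps] := lerP s p; last have [sq|qs] := lerP s q.
- rewrite overlapC (overlap_le s0 p1 sp) (overlap_le s0 q1 (le_trans sp pq)).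
  have h1 : sqrt s <= sqrt p by apply: ler_wsqrtr.
  have h2 : sqrt (1 - q) <= sqrt (1 - p) by apply: ler_wsqrtr; lra.
  have h3 : sqrt (1 - p) <= sqrt (1 - s) by apply: ler_wsqrtr; lra.
  nra.
- rewrite (overlap_le p0 s1 (ltW ps)) (overlap_le s0 q1 sq).
  have h1 : sqrt p <= sqrt s by apply: ler_wsqrtr; lra.
  have h2 : sqrt (1 - q) <= sqrt (1 - s) by apply: ler_wsqrtr; lra.
  nra.
- rewrite (overlap_le p0 s1 (ltW ps)) overlapC (overlap_le q0 s1 (ltW qs)).
  have h1 : sqrt q <= sqrt s by apply: ler_wsqrtr; lra.
  have h2 : sqrt (1 - s) <= sqrt (1 - q) by apply: ler_wsqrtr; lra.
  have h3 : sqrt p <= sqrt q by apply: ler_wsqrtr.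
  nra.
Qed.

Lemma le_2sqrt_form x y s : 0 <= x -> 0 <= y ->
  (forall a b : R, a * b * s <= a ^+ 2 * x + b ^+ 2 * y) -> s <= 2 * sqrt x * sqrt y.
Proof.
move=> x0 y0 form.
have [sx sy] := (sqrtr_ge0 x, sqrtr_ge0 y).
have [xy0|xy_gt0] := eqVneq (sqrt x * sqrt y) 0.
  rewrite -mulrA xy0 mulr0 leNgt; apply/negP => s_gt0.
  have /orP[x_eq0|y_eq0] : (sqrt x == 0) || (sqrt y == 0) by rewrite -mulf_eq0 xy0.
    have x_0 : x = 0 by move: x_eq0; rewrite sqrtr_eq0; lra.
    have := form ((y + 1) / s) 1.
    by rewrite x_0 mulr0 mulr1 divfK ?gt_eqF //; lra.
  have y_0 : y = 0 by move: y_eq0; rewrite sqrtr_eq0; lra.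
  have := form 1 ((x + 1) / s).
  by rewrite y_0 mulr0 mul1r divfK ?gt_eqF //; lra.
have := form (sqrt y) (sqrt x); rewrite !sqr_sqrtr // => h.
have : 0 < sqrt x * sqrt y by rewrite lt_def xy_gt0 mulr_ge0.
have [ex ey] := (sqr_sqrtr x0, sqr_sqrtr y0).
nra.
Qed.

Lemma overlap_ge x y u w s : 0 <= x -> 0 <= y -> 0 <= u -> 0 <= w -> x + u + w + y = 1 ->
  s <= 2 * sqrt x * sqrt y -> x + y + s <= overlap (x + w) (x + u).
Proof.
move=> x0 y0 u0 w0 sum1 hs.
have h1 : sqrt x <= sqrt (Num.min (x + w) (x + u)).
  by apply: ler_wsqrtr; rewrite le_min; apply/andP; split; lra.
have h2 : sqrt y <= sqrt (Num.min (1 - (x + w)) (1 - (x + u))).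
  by apply: ler_wsqrtr; rewrite le_min; apply/andP; split; lra.
have [sx sy] := (sqrtr_ge0 x, sqrtr_ge0 y).
have [ex ey] := (sqr_sqrtr x0, sqr_sqrtr y0).
rewrite /overlap; nra.
Qed.

Lemma min_weights (p q : R) : 0 <= p <= 1 -> 0 <= q <= 1 ->
  [/\ 0 <= Num.min p q, 0 <= Num.min (1 - p) (1 - q), 0 <= q - Num.min p q,
     0 <= p - Num.min p q & p + q - Num.min p q + Num.min (1 - p) (1 - q) = 1].
Proof.
move=> /andP[p0 p1] /andP[q0 q1]; rewrite !minElt ltrD2l ltrN2.
by case: ltgtP => [pq|qp|->]; split; lra.
Qed.

End Overlap.

Section Hermitian.
Variable R : realType.
Local Notation C := R[i].

Lemma adjmxE m n (A : 'M[C]_(m, n)) : adjmx A = (A ^t*)%sesqui.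
Proof. by apply/matrixP => i j; rewrite !mxE. Qed.

Lemma conjcD (x y : C) : (x + y)^*%C = x^*%C + y^*%C. Proof. exact: rmorphD. Qed.

Lemma conjcM (x y : C) : (x * y)^*%C = x^*%C * y^*%C. Proof. exact: rmorphM. Qed.

Lemma adjmx_entry m n (A : 'M[C]_(m, n)) i j : adjmx A i j = (A j i)^*%C.
Proof. by rewrite !mxE. Qed.

Lemma adjmx_mul m n p (A : 'M[C]_(m, n)) (B : 'M[C]_(n, p)) :
  adjmx (A *m B) = adjmx B *m adjmx A.
Proof. by rewrite /adjmx map_mxM trmx_mul. Qed.

Lemma adjmxK m n (A : 'M[C]_(m, n)) : adjmx (adjmx A) = A.
Proof. by apply/matrixP => i j; rewrite !mxE conjcK. Qed.

Lemma psd_conj m n (A : 'M[C]_(m, n)) (P : 'M[C]_n) : psd P -> psd (A *m P *m adjmx A).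
Proof. by move=> Ppsd v; have := Ppsd (adjmx A *m v); rewrite adjmx_mul adjmxK !mulmxA. Qed.

Lemma sum_delta2 n (F : 'I_n -> C) i j (c d : C) :
  \sum_k (c * (k == i)%:R + d * (k == j)%:R) * F k = c * F i + d * F j.
Proof.
have one l (a : C) : \sum_k a * (k == l)%:R * F k = a * F l.
  rewrite (bigD1 l) //= eqxx mulr1 big1 ?addr0 // => k /negbTE ->.
  by rewrite mulr0 mul0r.
by rewrite -!one -big_split; apply: eq_bigr => k _; rewrite mulrDl.
Qed.

Lemma psd_form2 n (P : 'M[C]_n) i j (c d : C) : psd P ->
  0 <= c^*%C * c * P i i + c^*%C * d * P i j + d^*%C * c * P j i + d^*%C * d * P j j.
Proof.
pose v : 'cV[C]_n := \col_k (c * (k == i)%:R + d * (k == j)%:R).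
have adjv l : adjmx v 0 l = c^*%C * (l == i)%:R + d^*%C * (l == j)%:R.
  by rewrite !mxE rmorphD !rmorphM /= !rmorph_nat.
move=> /(_ v); suff -> : (adjmx v *m P *m v) 0 0 =
    c^*%C * c * P i i + c^*%C * d * P i j + d^*%C * c * P j i + d^*%C * d * P j j by [].
rewrite mxE; under eq_bigr do rewrite !mxE mulrC.
rewrite sum_delta2; under eq_bigr do rewrite adjv; under [X in _ + _ * X]eq_bigr do rewrite adjv.
by rewrite !sum_delta2; ring.
Qed.

Lemma psd_diag_ge0 n (P : 'M[C]_n) i : psd P -> 0 <= P i i.
Proof.
by move=> /(psd_form2 i i 1 0); rewrite rmorph1 rmorph0 !(mul0r, mul1r, addr0).
Qed.

Lemma psd_adj n (P : 'M[C]_n) i j : psd P -> P j i = (P i j)^*%C.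
Proof.
move=> Ppsd; have := psd_form2 i j 1 1 Ppsd; have := psd_form2 i j 1 'i%C Ppsd.
have := psd_diag_ge0 i Ppsd; have := psd_diag_ge0 j Ppsd.
move: (P i i) (P i j) (P j i) (P j j) => [a1 a2] [b1 b2] [c1 c2] [d1 d2].
rewrite !lecE /=; simpc.
move=> /andP[/eqP e1 _] /andP[/eqP e2 _] /andP[/eqP e3 _] /andP[/eqP e4 _].
apply/eqP; rewrite eq_complex /=; apply/andP; split; apply/eqP; lra.
Qed.

Lemma psd_Re_form2 n (P : 'M[C]_n) i j (x y : R) : psd P ->
  0 <= x ^+ 2 * complex.Re (P i i) + y ^+ 2 * complex.Re (P j j)
       + x * y * complex.Re (P i j + P j i).
Proof.
move=> /(psd_form2 i j x%:C y%:C); rewrite !conjc_real.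
move: (P i i) (P i j) (P j i) (P j j) => [a1 a2] [b1 b2] [c1 c2] [d1 d2].
rewrite lecE /=; simpc => /andP[_]; rewrite /= !expr2; lra.
Qed.

Lemma unitary_adj_mulmx n (U : 'M[C]_n) : U \is unitarymx -> adjmx U *m U = 1%:M.
Proof. by move=> Uu; rewrite -[adjmx U]mul1mx adjmxE mulmxKtV. Qed.

Lemma adj_unitary n (U : 'M[C]_n) : U \is unitarymx -> adjmx U \is unitarymx.
Proof. by rewrite adjmxE trmxC_unitary. Qed.

Lemma psd_codiagonalizable n (As : seq 'M[C]_n) :
  {in As, forall A, psd A} -> {in As &, forall A B, comm_mx A B} ->
  exists2 U, U \is unitarymx & {in As, forall A, is_diag_mx (U *m A *m adjmx U : 'M[C]_n)}.
Proof.
(* A common unitary triangularization; a triangular positive matrix is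
   hermitian, hence diagonal. *)
move=> Apsd Acomm; have [U Uu /allP UAs] := cotrigonalization Acomm.
exists U; first exact: Uu.
move=> A AAs; have UAtrig : is_trig_mx (conjmx U A) := UAs A AAs.
rewrite (conjymx _ Uu) -adjmxE in UAtrig; move/is_trig_mxP: UAtrig => UAtrig.
have UApsd := psd_conj U (Apsd A AAs).
apply/is_diag_mxP => i j; case: ltngtP => // [ij|ji] _; first exact: UAtrig.
by rewrite (psd_adj _ _ UApsd) UAtrig ?rmorph0.
Qed.
End Hermitian.

Section Tensor.
Variable R : realType.
Local Notation C := R[i].
Local Notation idx a b := (@mxtens_index 2 2 (a, b)).

Lemma big_ord2 (F : 'I_2 -> C) : \sum_(i < 2) F i = F 0 + F 1.
Proof. by rewrite !big_ord_recl big_ord0 addr0; congr (F _ + F _); apply: val_inj. Qed.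

Lemma big_mxtens2 (F : 'I_(2 * 2) -> C) : \sum_(k < 2 * 2) F k =
  F (idx 0 0) + F (idx 0 1) + F (idx 1 0) + F (idx 1 1).
Proof.
rewrite (reindex (@mxtens_index 2 2)) /=; last first.
  by exists (@mxtens_unindex 2 2) => k _; rewrite (mxtens_indexK, mxtens_unindexK).
rewrite (eq_bigr (fun p => F (idx p.1 p.2))); last by case.
by rewrite -(pair_bigA _ (fun a b => F (idx a b))) /= !big_ord2 !addrA.
Qed.

Lemma ord2P (i : 'I_2) : i = 0 \/ i = 1.
Proof. by case: i => [[|[|//]]] h; [left|right]; apply: val_inj. Qed.

Ltac expand := repeat progress rewrite ?mxE ?big_mxtens2 ?big_ord2 ?mxtens_indexK /=.

Lemma sqr_mx (A : 'M[C]_(2 * 2)) : A ^+ 2 = A *m A.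
Proof. by rewrite expr2 mulmxE. Qed.

Definition pauli_diff (k : 'M[C]_2) : 'M[C]_(2 * 2) :=
  k *t (1%:M : 'M[C]_2)^T - (1%:M : 'M[C]_2) *t k^T.

Lemma pauli_diffE k a1 a2 b1 b2 : pauli_diff k (idx a1 a2) (idx b1 b2) =
  k a1 b1 * (a2 == b2)%:R - (a1 == b1)%:R * k b2 a2.
Proof. by rewrite /pauli_diff !mxE !mxtens_indexK /= eq_sym. Qed.

Lemma Csymm2E a1 a2 b1 b2 : Csymm2 R (idx a1 a2) (idx b1 b2) =
  8 * ((a1 == b1) && (a2 == b2))%:R - 4 * ((a1 == a2) && (b1 == b2))%:R.
Proof.
have -> : Csymm2 R = pauli_diff (pauli1 R) *m pauli_diff (pauli1 R)
    + pauli_diff (pauli2 R) *m pauli_diff (pauli2 R)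
    + pauli_diff (pauli3 R) *m pauli_diff (pauli3 R).
  by rewrite /Csymm2 !big_cons big_nil [X in _ + (_ + X)]addr0 addrA; congr (_ + _ + _); apply: sqr_mx.
move: (pauli_diffE (pauli1 R)) (pauli_diffE (pauli2 R)) (pauli_diffE (pauli3 R)).
move: (pauli_diff _) (pauli_diff _) (pauli_diff _) => X1 X2 X3 E1 E2 E3.
rewrite !mxE !big_mxtens2 !E1 !E2 !E3.
have ii : 'i%C * 'i%C = -1 :> C by rewrite -expr2 sqr_i.
case: (ord2P a1) => ->; case: (ord2P a2) => ->; case: (ord2P b1) => ->;
  case: (ord2P b2) => ->; rewrite !mxE /=.
all: ring: ii.
Qed.

(* ⟨Ω|P|Ω⟩ for the unnormalised maximally entangled vector Ω = Σ_a e_a ⊗ e_a^*. *)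
Definition maxent (P : 'M[C]_(2 * 2)) : C := \sum_(a < 2) \sum_(b < 2) P (idx a a) (idx b b).

Lemma cost_maxent P : \tr (P *m Csymm2 R) = 8 * \tr P - 4 * maxent P.
Proof.
move: (@Csymm2E) => CE; move: (Csymm2 R) CE => Cm CE.
by rewrite /mxtrace /maxent; expand; rewrite !CE /=; ring.
Qed.

Definition tensJ (U : 'M[C]_2) : 'M[C]_(2 * 2) := U *t map_mx conjc U.

Section TensJ.
Variable U : 'M[C]_2.
Hypothesis Uu : adjmx U *m U = 1%:M.

Lemma ptr2_tensJ P : ptr2 (tensJ U *m P *m adjmx (tensJ U)) = U *m ptr2 P *m adjmx U.
Proof.
apply/matrixP => i k.
transitivity (\sum_(a1 < 2) \sum_(a2 < 2) \sum_(b1 < 2) \sum_(b2 < 2)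
  U i a1 * P (idx a1 a2) (idx b1 b2) * (U k b1)^*%C * (adjmx U *m U) a2 b2).
  by expand; rewrite !rmorphM /= !conjcK; ring.
by rewrite Uu /ptr2; expand; ring.
Qed.

Lemma ptr1_tensJ P : ptr1 (tensJ U *m P *m adjmx (tensJ U)) = map_mx conjc U *m ptr1 P *m U^T.
Proof.
apply/matrixP => j l.
transitivity (\sum_(a1 < 2) \sum_(a2 < 2) \sum_(b1 < 2) \sum_(b2 < 2)
  (U j a2)^*%C * P (idx a1 a2) (idx b1 b2) * U l b2 * (adjmx U *m U) b1 a1).
  by expand; rewrite !rmorphM /= !conjcK; ring.
by rewrite Uu /ptr1; expand; ring.
Qed.

Lemma tr_tensJ P : \tr (tensJ U *m P *m adjmx (tensJ U)) = \tr P.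
Proof.
transitivity (\sum_(a1 < 2) \sum_(a2 < 2) \sum_(b1 < 2) \sum_(b2 < 2)
  P (idx a1 a2) (idx b1 b2) * (adjmx U *m U) b1 a1 * (adjmx U *m U) a2 b2).
  by rewrite /mxtrace; expand; rewrite !rmorphM /= !conjcK; ring.
by rewrite Uu /mxtrace; expand; ring.
Qed.

Lemma maxent_tensJ P : maxent (tensJ U *m P *m adjmx (tensJ U)) = maxent P.
Proof.
transitivity (\sum_(a1 < 2) \sum_(a2 < 2) \sum_(b1 < 2) \sum_(b2 < 2)
  map_mx conjc (adjmx U *m U) a1 a2 * P (idx a1 a2) (idx b1 b2) * (adjmx U *m U) b1 b2).
  by rewrite /maxent; expand; rewrite !rmorphD !rmorphM /= !conjcK; ring.
by rewrite Uu map_mx1 /maxent; expand; ring.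
Qed.

End TensJ.
End Tensor.

Section Transport.
Variable R : realType.
Local Notation C := R[i].

Lemma adj_conjK (U X : 'M[C]_2) : U \is unitarymx ->
  adjmx U *m (U *m X *m adjmx U) *m adjmx (adjmx U) = X.
Proof.
by move=> /unitary_adj_mulmx UU; rewrite adjmxK !mulmxA UU mul1mx -mulmxA UU mulmx1.
Qed.

Lemma state_conj (U X : 'M[C]_2) : U \is unitarymx -> state X -> state (U *m X *m adjmx U).
Proof.
move=> /unitary_adj_mulmx UU [Xpsd Xtr]; split; first exact: psd_conj.
by rewrite mxtrace_mulC mulmxA UU mul1mx.
Qed.

Lemma coupling_conj (U rho omega : 'M[C]_2) (P : 'M[C]_(2 * 2)) : U \is unitarymx -> coupling rho omega P ->
  coupling (U *m rho *m adjmx U) (U *m omega *m adjmx U) (tensJ U *m P *m adjmx (tensJ U)).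
Proof.
move=> Uu [[Ppsd Ptr] [P2 P1]]; have UU := unitary_adj_mulmx Uu.
split; [split|split].
- exact: psd_conj.
- by rewrite tr_tensJ.
- by rewrite ptr2_tensJ // P2.
- by rewrite ptr1_tensJ // P1 !trmx_mul /adjmx trmxK mulmxA.
Qed.

Lemma cost_conj (U : 'M[C]_2) (P : 'M[C]_(2 * 2)) : U \is unitarymx ->
  \tr (tensJ U *m P *m adjmx (tensJ U) *m Csymm2 R) = \tr (P *m Csymm2 R).
Proof.
by move=> /unitary_adj_mulmx UU; rewrite !cost_maxent tr_tensJ // maxent_tensJ.
Qed.

Definition costs (rho omega : 'M[C]_2) : set R :=
  [set x | exists P, coupling rho omega P /\ x = complex.Re (\tr (P *m Csymm2 R))]%classic.

Lemma costs_conj_sub (U rho omega : 'M[C]_2) : U \is unitarymx ->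
  (costs rho omega `<=` costs (U *m rho *m adjmx U) (U *m omega *m adjmx U))%classic.
Proof.
move=> Uu _ [P [Pc ->]]; exists (tensJ U *m P *m adjmx (tensJ U)).
by rewrite cost_conj //; split => //; apply: coupling_conj.
Qed.

Lemma Dsymm2_sq_conj (U rho omega : 'M[C]_2) : U \is unitarymx ->
  Dsymm2_sq (U *m rho *m adjmx U) (U *m omega *m adjmx U) = Dsymm2_sq rho omega.
Proof.
move=> Uu; rewrite /Dsymm2_sq -/(costs _ _) -/(costs rho omega); congr inf.
apply/seteqP; split; last exact: costs_conj_sub.
by have := @costs_conj_sub _ (U *m rho *m adjmx U) (U *m omega *m adjmx U) (adj_unitary Uu);
  rewrite !adj_conjK.
Qed.

Lemma dsymm2_sq_conj (U rho omega : 'M[C]_2) : U \is unitarymx ->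
  dsymm2_sq (U *m rho *m adjmx U) (U *m omega *m adjmx U) = dsymm2_sq rho omega.
Proof. by move=> Uu; rewrite /dsymm2_sq !Dsymm2_sq_conj. Qed.

End Transport.

Section Diagonal.
Variable R : realType.
Local Notation C := R[i].
Local Notation Re := complex.Re.
Local Notation idx a b := (@mxtens_index 2 2 (a, b)).

Lemma ReD (x y : C) : Re (x + y) = Re x + Re y.
Proof. exact: (raddfD (@complex.Re R)). Qed.

Lemma ReB (x y : C) : Re (x - y) = Re x - Re y.
Proof. exact: (raddfB (@complex.Re R)). Qed.

Lemma ReMn n (z : C) : Re (n%:R * z) = n%:R * Re z.
Proof. by rewrite !mulr_natl (raddfMn (@complex.Re R)). Qed.

Lemma tr_mxtens2 (P : 'M[C]_(2 * 2)) : \tr P =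
  P (idx 0 0) (idx 0 0) + P (idx 0 1) (idx 0 1) + P (idx 1 0) (idx 1 0) + P (idx 1 1) (idx 1 1).
Proof. by rewrite /mxtrace big_mxtens2. Qed.

Lemma coupling_diag_marginals (rho omega : 'M[C]_2) (P : 'M[C]_(2 * 2)) : coupling rho omega P ->
  rho 0 0 = P (idx 0 0) (idx 0 0) + P (idx 1 0) (idx 1 0) /\
  omega 0 0 = P (idx 0 0) (idx 0 0) + P (idx 0 1) (idx 0 1).
Proof.
move=> [_ [<- P1]]; split; last by rewrite mxE big_ord2.
by rewrite -[rho]trmxK -P1 !mxE big_ord2.
Qed.

Lemma cost_ge_overlap (rho omega : 'M[C]_2) (P : 'M[C]_(2 * 2)) : coupling rho omega P ->
  8 - 4 * overlap (Re (rho 0 0)) (Re (omega 0 0)) <= Re (\tr (P *m Csymm2 R)).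
Proof.
move=> Pc; have [[Ppsd Ptr] _] := Pc; have [-> ->] := coupling_diag_marginals Pc.
have diag_ge0 a b : 0 <= Re (P (idx a b) (idx a b)).
  by have := psd_diag_ge0 (idx a b) Ppsd; rewrite lecE => /andP[].
have form := psd_Re_form2 (idx 0 0) (idx 1 1) _ _ Ppsd.
have : Re (\tr P) = 1 by rewrite Ptr.
rewrite cost_maxent ReB !ReMn tr_mxtens2 /maxent !big_ord2 !ReD.
have := overlap_ge (diag_ge0 0 0) (diag_ge0 1 1) (diag_ge0 0 1) (diag_ge0 1 0).
set x := Re (P (idx 0 0) _); set u := Re (P (idx 0 1) _).
set w := Re (P (idx 1 0) _); set y := Re (P (idx 1 1) _).
set s := Re (P (idx 0 0) (idx 1 1) + P (idx 1 1) (idx 0 0)) in form *.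
move=> le_overlap sum1; have {}le_overlap := le_overlap s sum1.
have : s <= 2 * Num.sqrt x * Num.sqrt y.
  apply: le_2sqrt_form; [exact: diag_ge0 | exact: diag_ge0 | move=> a b].
  by have := form a (- b); rewrite sqrrN; lra.
rewrite /s ReD in le_overlap *; lra.
Qed.

Definition qubit_diag (p : R) : 'M[C]_2 :=
  \matrix_(i, j) ((i == j)%:R * (if i == 0 then p else 1 - p)%:C).

Lemma qubit_diag00 p : Re (qubit_diag p 0 0) = p.
Proof. by rewrite mxE mul1r. Qed.

Lemma ge0_complexE (z : C) : 0 <= z -> z = (Re z)%:C.
Proof. by case: z => a b; rewrite lecE /= => /andP [/eqP -> _]. Qed.

Lemma diag_stateP (rho : 'M[C]_2) : state rho -> is_diag_mx rho ->
  exists2 p, 0 <= p <= 1 & rho = qubit_diag p.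
Proof.
move=> [rho_psd rho_tr] /is_diag_mxP rho_diag.
have [r0 r1] := (psd_diag_ge0 0 rho_psd, psd_diag_ge0 1 rho_psd).
have tr1 : Re (rho 0 0) + Re (rho 1 1) = 1.
  by move: rho_tr; rewrite /mxtrace big_ord2 => /(congr1 (@complex.Re R)); rewrite ReD.
exists (Re (rho 0 0)).
  by move: r0 r1; rewrite !lecE => /andP[_ ?] /andP[_ ?]; apply/andP; split; lra.
apply/matrixP => i j; rewrite mxE.
have [<-|ij] := eqVneq i j; last by rewrite rho_diag // mul0r.
rewrite mul1r; case: (ord2P i) => -> /=; first exact: ge0_complexE.
by rewrite (ge0_complexE r1); congr (_%:C); lra.
Qed.

Lemma commuting_states_diag (rho sigma omega : 'M[C]_2) :
  state rho -> state sigma -> state omega ->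
  rho *m sigma = sigma *m rho -> sigma *m omega = omega *m sigma ->
  rho *m omega = omega *m rho ->
  exists U p s q, [/\ U \is unitarymx, [/\ 0 <= p <= 1, 0 <= s <= 1 & 0 <= q <= 1] &
    [/\ U *m rho *m adjmx U = qubit_diag p, U *m sigma *m adjmx U = qubit_diag s
       & U *m omega *m adjmx U = qubit_diag q]].
Proof.
move=> rho_st sigma_st omega_st rs so ro; pose As := [:: rho; sigma; omega].
have [||U Uu Udiag] := @psd_codiagonalizable R 2 As.
- by move=> A; rewrite !inE => /or3P[]/eqP->; [case: rho_st | case: sigma_st | case: omega_st].
- move=> A B; rewrite !inE /comm_mx => /or3P[]/eqP-> /or3P[]/eqP->; by [|apply/esym].
have diag_conj X : state X -> X \in As ->
    exists2 p, 0 <= p <= 1 & U *m X *m adjmx U = qubit_diag p.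
  by move=> Xst XAs; apply: diag_stateP; [apply: state_conj | apply: Udiag].
have [rho_in sigma_in omega_in] : [/\ rho \in As, sigma \in As & omega \in As].
  by rewrite !inE !eqxx !orbT.
have [p p01 Ep] := diag_conj rho rho_st rho_in.
have [s s01 Es] := diag_conj sigma sigma_st sigma_in.
have [q q01 Eq] := diag_conj omega omega_st omega_in.
by exists U, p, s, q.
Qed.

Section OptimalCoupling.
Variables p q : R.

(* Mass min(p, q) on e_0 ⊗ e_0^* and min(1-p, 1-q) on e_1 ⊗ e_1^*, fully
   coherent with each other; the rest of the marginals sits on e_0 ⊗ e_1^* and
   e_1 ⊗ e_0^*. *)
Definition diag_coupling_entry (a1 a2 b1 b2 : 'I_2) : R :=
  let m1 := Num.min p q in let m2 := Num.min (1 - p) (1 - q) in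
  if (a1 == a2) && (b1 == b2) then
    if a1 == b1 then (if a1 == 0 then m1 else m2) else Num.sqrt m1 * Num.sqrt m2
  else if (a1 == b1) && (a2 == b2) then (if a1 == 0 then q - m1 else p - m1) else 0.

Definition diag_coupling : 'M[C]_(2 * 2) := \matrix_(k, l)
  (diag_coupling_entry (mxtens_unindex k).1 (mxtens_unindex k).2
     (mxtens_unindex l).1 (mxtens_unindex l).2)%:C.

Lemma diag_couplingE a1 a2 b1 b2 :
  diag_coupling (idx a1 a2) (idx b1 b2) = (diag_coupling_entry a1 a2 b1 b2)%:C.
Proof. by rewrite mxE !mxtens_indexK. Qed.

Hypotheses (p01 : 0 <= p <= 1) (q01 : 0 <= q <= 1).

Lemma diag_coupling_cost :
  Re (\tr (diag_coupling *m Csymm2 R)) = 8 - 4 * overlap p q.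
Proof.
have [m10 m20 _ _ sum1] := min_weights p01 q01.
rewrite cost_maxent ReB !ReMn tr_mxtens2 /maxent !big_ord2 !ReD !diag_couplingE /=.
by rewrite /diag_coupling_entry /= /overlap sqrrD !sqr_sqrtr // mulr2n; lra.
Qed.

Lemma diag_coupling_psd : psd diag_coupling.
Proof.
have [m10 m20 hq hp _] := min_weights p01 q01.
move=> v; move: diag_couplingE; move: diag_coupling => M ME.
rewrite !mxE !big_mxtens2 !mxE !big_mxtens2 !ME !adjmx_entry /diag_coupling_entry /=.
set a := Num.sqrt _; set b := Num.sqrt _.
have ea : (Num.min p q)%:C = a%:C * a%:C by rewrite -rmorphM -expr2 sqr_sqrtr.
have eb : (Num.min (1 - p) (1 - q))%:C = b%:C * b%:C by rewrite -rmorphM -expr2 sqr_sqrtr.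
rewrite rmorphM /= ea eb.
set v00 := v (idx 0 0) ord0; set v01 := v (idx 0 1) ord0.
set v10 := v (idx 1 0) ord0; set v11 := v (idx 1 1) ord0.
set w := a%:C * v00 + b%:C * v11.
have wJ : w^*%C = a%:C * v00^*%C + b%:C * v11^*%C by rewrite /w conjcD !conjcM !conjc_real.
set E := (X in 0 <= X).
have -> : E = w * w^*%C + (q - Num.min p q)%:C * (v01 * v01^*%C)
    + (p - Num.min p q)%:C * (v10 * v10^*%C) by rewrite wJ /E /w; ring.
by rewrite !addr_ge0 ?mulcJ_ge0 // mulr_ge0 ?mulcJ_ge0 ?ler0c.
Qed.

Lemma diag_coupling_coupling : coupling (qubit_diag p) (qubit_diag q) diag_coupling.
Proof.
have [m10 m20 hq hp sum1] := min_weights p01 q01.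
split; [split|split]; first exact: diag_coupling_psd.
  rewrite tr_mxtens2 !diag_couplingE /diag_coupling_entry /= -!rmorphD.
  by rewrite -(rmorph1 (real_complex R)); congr (_%:C); lra.
all: apply/matrixP => i k; rewrite !mxE !big_ord2 !diag_couplingE /diag_coupling_entry.
all: case: (ord2P i) => ->; case: (ord2P k) => -> /=.
all: rewrite ?mul0r ?mul1r -!rmorphD -?(rmorph0 (real_complex R)); congr (_%:C); lra.
Qed.

End OptimalCoupling.

Lemma Dsymm2_sq_diag p q : 0 <= p <= 1 -> 0 <= q <= 1 ->
  Dsymm2_sq (qubit_diag p) (qubit_diag q) = 8 - 4 * overlap p q.
Proof.
move=> p01 q01; rewrite /Dsymm2_sq -/(costs _ _).
have attained : costs (qubit_diag p) (qubit_diag q) (8 - 4 * overlap p q).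
  exists (diag_coupling p q); rewrite diag_coupling_cost //.
  by split=> //; apply: diag_coupling_coupling.
have lb : lbound (costs (qubit_diag p) (qubit_diag q)) (8 - 4 * overlap p q).
  by move=> _ [P [Pc ->]]; have := cost_ge_overlap Pc; rewrite !qubit_diag00.
apply/eqP; rewrite eq_le ge_inf ?lb_le_inf //; last by exists (8 - 4 * overlap p q).
by exists (8 - 4 * overlap p q).
Qed.

End Diagonal.
Unset Implicit Arguments.

Theorem proposition3p4 (R : realType) (rho sigma omega : 'M[R[i]]_2) :
  state rho -> state sigma -> state omega ->
  rho *m sigma = sigma *m rho -> sigma *m omega = omega *m sigma ->
  rho *m omega = omega *m rho ->
  dsymm2_sq rho omega <= dsymm2_sq rho sigma + dsymm2_sq sigma omega.
Proof.
move=> rho_st sigma_st omega_st rs so ro.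
have [U [p [s [q [Uu [p01 s01 q01] [Ep Es Eq]]]]]] :=
  commuting_states_diag rho_st sigma_st omega_st rs so ro.
rewrite -(dsymm2_sq_conj rho omega Uu) -(dsymm2_sq_conj rho sigma Uu).
rewrite -(dsymm2_sq_conj sigma omega Uu) Ep Es Eq /dsymm2_sq !Dsymm2_sq_diag //.
by have := overlap_submod p01 q01 s01; lra.
Qed.
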